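(* Any quantum oracle algorithm that solves $\mathsf{EL\text{-}LCS\text{-}RLE}$ with probability at least $2/3$ requires $\tilde\Omega(n)$ queries, where $n$ is the encoded length of the inputs.
   Context: A string $\tilde s$ has run-length encoding (RLE) $s=s[1]\cdots s[m]$, its sequence of maximal runs of identical characters, each run having character $C(s[i])$ and length $R(s[i])$; $|s|=m$ is the encoded length. The problem $\mathsf{EL\text{-}LCS\text{-}RLE}$: given quantum oracle access to two RLE strings $A$ and $B$ only through the unitaries $|i\rangle|c\rangle|r\rangle\mapsto|i\rangle|c\oplus C(S[i])\rangle|r\oplus R(S[i])\rangle$ for $S\in\{A,B\}$ (no prefix-sum oracle), compute $|s|$ for an RLE string $s$ such that $\tilde s$ is a longest common substring of $\tilde A$ and $\tilde B$. $\tilde\Omega(\cdot)$ hides polylogarithmic factors. *)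

From mathcomp Require Import all_boot all_order all_algebra algC.
Set Implicit Arguments. Unset Strict Implicit. Unset Printing Implicit Defensive.
Import Order.TTheory GRing.Theory Num.Theory.

Definition bits (b : nat) := {ffun 'I_b -> bool}.
Definition bval (b : nat) (f : bits b) : nat := \sum_(i < b) (f i : nat) * 2 ^ i.
Definition bxor (b : nat) (f g : bits b) : bits b := [ffun j => f j (+) g j].
Definition bzero (b : nat) : bits b := [ffun => false].

(* An RLE string over alphabet bits bc, run lengths stored in br bits:
   a sequence of runs (character, length). *)
Definition rle_str (bc br : nat) := seq (bits bc * bits br).

(* s is the RLE of some string: every run has positive length and
   consecutive runs have different characters (maximality of runs). *)
Definition valid_rle (bc br : nat) (s : rle_str bc br) : bool :=
  all (fun p => 0 < bval p.2) s && sorted (fun p q => p.1 != q.1) s.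

Definition decode (bc br : nat) (s : rle_str bc br) : seq (bits bc) :=
  flatten [seq nseq (bval p.2) p.1 | p <- s].

Fixpoint rle (T : eqType) (t : seq T) : seq (T * nat) :=
  match t with
  | [::] => [::]
  | x :: t' =>
    match rle t' with
    | (y, k) :: r => if x == y then (y, k.+1) :: r else (x, 1) :: (y, k) :: r
    | [::] => [:: (x, 1)]
    end
  end.

Definition ellcs_answer (bc br : nat) (A B : rle_str bc br) (a : nat) : Prop :=
  exists t : seq (bits bc),
    [/\ infix t (decode A), infix t (decode B),
        (forall u, infix u (decode A) -> infix u (decode B) -> size u <= size t)
      & a = size (rle t)].

Local Open Scope ring_scope.

(* Basis of the state space: query register |S>|i>|c>|r> (S : bool selects
   A (false) or B (true), i : 'I_n a position, c, r registers of bc and br bits)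
   together with a workspace register 'I_w. *)
Definition qreg (n bc br : nat) := (bool * 'I_n * bits bc * bits br)%type.
Definition qbasis (n bc br w : nat) := (qreg n bc br * 'I_w)%type.

Definition qvec (X : finType) := X -> algC.
Definition qop (X : finType) := X -> X -> algC.

Definition qapply (X : finType) (U : qop X) (v : qvec X) : qvec X :=
  fun x => \sum_(y : X) U x y * v y.

Definition unit_vec (X : finType) (v : qvec X) : Prop :=
  \sum_(x : X) `|v x| ^+ 2 = 1.

Definition unitary (X : finType) (U : qop X) : Prop :=
  forall y y' : X, \sum_(x : X) (U x y)^* * U x y' = (y == y')%:R.

Definition oracle_map (n bc br w : nat) (A B : rle_str bc br)
  (q : qbasis n bc br w) : qbasis n bc br w :=
  let: ((sel, i, c, r), z) := q in
  let p := nth (bzero bc, bzero br) (if sel then B else A) i in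
  ((sel, i, bxor c p.1, bxor r p.2), z).

Definition oracle (n bc br w : nat) (A B : rle_str bc br) : qop (qbasis n bc br w) :=
  fun x y => ((x == oracle_map A B y) : nat)%:R.

Fixpoint qstate (X : finType) (O : qop X) (psi0 : qvec X) (U : nat -> qop X)
  (t : nat) : qvec X :=
  match t with
  | 0 => qapply (U 0) psi0
  | t'.+1 => qapply (U t) (qapply O (qstate O psi0 U t'))
  end.

Definition solves_ellcs (n bc br w T : nat) (psi0 : qvec (qbasis n bc br w))
  (U : nat -> qop (qbasis n bc br w)) (out : qbasis n bc br w -> nat) : Prop :=
  forall A B : rle_str bc br,
    valid_rle A -> valid_rle B -> size A = n -> size B = n ->
    forall good : pred nat, (forall a, good a <-> ellcs_answer A B a) ->
      2%:R / 3%:R <= \sum_(x | good (out x))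
                        `|qstate (oracle A B) psi0 U T x| ^+ 2 :> algC.

(* A threshold problem reduces to EL-LCS-RLE, and the weighted adversary method bounds it.
   For S a subset of {0, ..., m-1}, let A_S and B_S have m + 2 runs: run j < m has character
   j mod 2 and length 3 if j is in S and 1 otherwise, run m is a one-character separator that
   differs between A_S and B_S, and run m + 1 is a block of L copies of a fifth character.
   A common substring avoids the separator, so a longest one is either the prefix (decoded
   length m + 2|S|, encoded length m) or the final block (encoded length 1); with
   L = m + 2k + 1 and k = floor(m/2) the answer is 1 on the slice |S| = k and m on the slice
   |S| = k + 1.  The oracles of S and S + {i} differ only at position i, so a query lowers
   |<phi_S, phi_(S+{i})>| by at most the amplitude mass at position i; summed over all such
   pairs, this overlap starts at the number of pairs, loses at most the number of sets of the
   two slices per query, and must end below 17/18 of its start.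
   Double counting the pairs gives (m - k)(k + 1) <= 18 T (m + 1), hence n = m + 2 <= 74 T;
   registers of O(log n) bits hold all codes and run lengths. *)

From mathcomp Require Import all_boot all_order all_algebra algC.
From mathcomp Require Import ring zify.
Set Implicit Arguments. Unset Strict Implicit. Unset Printing Implicit Defensive.
Import Order.TTheory GRing.Theory Num.Theory.

Local Open Scope ring_scope.

Definition qdot (X : finType) (a b : qvec X) : algC := \sum_x (a x)^* * b x.

Definition qmass (X : finType) (pos : X -> nat) (a : qvec X) (i : nat) : algC :=
  \sum_(x | pos x == i) `|a x| ^+ 2.

Definition qperm (X : finType) (f : X -> X) : qop X :=
  fun x y => ((x == f y) : nat)%:R.

Lemma qdotvv (X : finType) (a : qvec X) : qdot a a = \sum_x `|a x| ^+ 2.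
Proof. by apply: eq_bigr => x _; rewrite normCK mulrC. Qed.

Lemma qdot_unitary (X : finType) (U : qop X) (a b : qvec X) :
  unitary U -> qdot (qapply U a) (qapply U b) = qdot a b.
Proof.
move=> HU; rewrite /qdot /qapply.
have expand x : (\sum_y U x y * a y)^* * (\sum_y' U x y' * b y') =
                \sum_y \sum_y' (U x y * a y)^* * (U x y' * b y').
  by rewrite rmorph_sum mulr_suml; apply: eq_bigr => y _; rewrite mulr_sumr.
have orth y y' : \sum_x (U x y * a y)^* * (U x y' * b y') =
                 (a y)^* * b y' * (y == y')%:R.
  by rewrite -HU mulr_sumr; apply: eq_bigr => x _; rewrite rmorphM /=; ring.
rewrite (eq_bigr _ (fun x _ => expand x)) exchange_big; apply: eq_bigr => y _ /=.
rewrite exchange_big (bigD1 y) //= orth eqxx mulr1 big1 ?addr0 // => y' y'y.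
by rewrite orth eq_sym (negbTE y'y) mulr0.
Qed.

Lemma reindex_involutive (X : finType) (f : X -> X) (P : pred X) (F : X -> algC) :
  involutive f -> (forall x, P (f x) = P x) ->
  \sum_(x | P x) F (f x) = \sum_(x | P x) F x.
Proof.
move=> fK Pf; rewrite [RHS](reindex_inj (can_inj fK)) /=.
by apply: eq_bigl => x; rewrite Pf.
Qed.

Lemma qapply_qperm (X : finType) (f : X -> X) (a : qvec X) x :
  involutive f -> qapply (qperm f) a x = a (f x).
Proof.
move=> fK; rewrite /qapply /qperm (bigD1 (f x)) //= fK eqxx mul1r big1 ?addr0 //.
by move=> y yfx; rewrite eq_sym (can2_eq fK fK) (negbTE yfx) mul0r.
Qed.

Lemma qdot_qperm (X : finType) (f : X -> X) (a b : qvec X) :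
  involutive f -> qdot (qapply (qperm f) a) (qapply (qperm f) b) = qdot a b.
Proof.
move=> fK; rewrite /qdot.
under eq_bigr => x _ do rewrite !qapply_qperm //.
exact: (reindex_involutive (fun x => (a x)^* * b x)).
Qed.

Lemma ler_sum_subpred (X : finType) (P Q : pred X) (F : X -> algC) :
  (forall x, 0 <= F x) -> {subset P <= Q} ->
  \sum_(x | P x) F x <= \sum_(x | Q x) F x.
Proof.
move=> F0 PQ; rewrite [leRHS](bigID P) /= (eq_bigl P) ?lerDl ?sumr_ge0 // => x.
exact: andb_idl (PQ x).
Qed.

Lemma ler_norm_qdot_sum (X : finType) (P : pred X) (u v : qvec X) :
  `|\sum_(x | P x) (u x)^* * v x| <= \sum_(x | P x) `|u x| * `|v x|.
Proof.
apply: le_trans (ler_norm_sum _ _ _) _.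
by apply: ler_sum => x _; rewrite normrM norm_conjC.
Qed.

Lemma ler_mean_square_sum (X : finType) (P : pred X) (u v : qvec X) (al be : nat) :
  (al * be)%:R * (\sum_(x | P x) `|u x| * `|v x|) *+ 2 <=
  (al ^ 2)%:R * (\sum_(x | P x) `|u x| ^+ 2) + (be ^ 2)%:R * (\sum_(x | P x) `|v x| ^+ 2).
Proof.
rewrite !mulr_sumr -sumrMnl -big_split /=; apply: ler_sum => x _.
have real_scaled c (z : algC) : c%:R * `|z| \is Num.real.
  by rewrite rpredM ?realn ?normr_real.
have := (real_leif_mean_square_scaled (real_scaled al (u x)) (real_scaled be (v x))).1.
by rewrite natrM !natrX mulrACA -!exprMn.
Qed.

Lemma qdot_query_step (X : finType) (f g : X -> X) (pos : X -> nat) (i : nat)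
    (a b : qvec X) :
  involutive f -> involutive g ->
  (forall x, pos (f x) = pos x) -> (forall x, pos (g x) = pos x) ->
  (forall x, pos x != i -> f x = g x) ->
  `|qdot a b| - (qmass pos a i + qmass pos b i) <=
  `|qdot (qapply (qperm f) a) (qapply (qperm g) b)|.
Proof.
move=> fK gK pos_f pos_g f_eq_g.
set at_i := fun x => pos x == i.
set D := \sum_(x | at_i x) (a (f x))^* * b (g x) - \sum_(x | at_i x) (a x)^* * b x.
have off_i : \sum_(x | ~~ at_i x) (a (f x))^* * b (g x) = \sum_(x | ~~ at_i x) (a x)^* * b x.
  rewrite -(reindex_involutive (fun x => (a x)^* * b x) fK); last by move=> x; rewrite /at_i pos_f.
  by apply: eq_bigr => x /f_eq_g <-.
have qdotD : qdot (qapply (qperm f) a) (qapply (qperm g) b) = qdot a b + D.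
  rewrite /qdot /D; under eq_bigr => x _ do rewrite !qapply_qperm //.
  rewrite [LHS](bigID at_i) [in RHS](bigID at_i) /= off_i; ring.
have half_bound (h k : X -> X) : involutive h -> involutive k ->
    (forall x, pos (h x) = pos x) -> (forall x, pos (k x) = pos x) ->
    `|\sum_(x | at_i x) (a (h x))^* * b (k x)| *+ 2 <= qmass pos a i + qmass pos b i.
  move=> hK kK pos_h pos_k.
  apply: le_trans (ler_wMn2r 2 (ler_norm_qdot_sum _ _ _)) _.
  have := ler_mean_square_sum at_i (a \o h) (b \o k) 1 1; rewrite !mul1r.
  rewrite (reindex_involutive (fun x => `|a x| ^+ 2) hK); last by move=> x; rewrite /at_i pos_h.
  by rewrite (reindex_involutive (fun x => `|b x| ^+ 2) kK) // => x; rewrite /at_i pos_k.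
have normD : `|D| <= qmass pos a i + qmass pos b i.
  rewrite -(ler_pMn2r (n := 2)) //; apply: le_trans (ler_wMn2r 2 (ler_normB _ _)) _.
  rewrite mulrnDl [leRHS]mulr2n.
  by apply: lerD; [exact: half_bound | exact: (half_bound id id)].
by rewrite qdotD; apply: le_trans (lerB_normD _ D); rewrite lerD2l lerN2.
Qed.

Lemma qstate_unit (X : finType) (f : X -> X) (psi0 : qvec X) (U : nat -> qop X) T t :
  involutive f -> unit_vec psi0 -> (forall s, (s <= T)%N -> unitary (U s)) ->
  (t <= T)%N -> unit_vec (qstate (qperm f) psi0 U t).
Proof.
rewrite /unit_vec -!qdotvv => fK psi0_unit U_unitary.
have U_step s v : (s <= T)%N -> qdot (qapply (U s) v) (qapply (U s) v) = qdot v v.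
  by move=> sT; apply/qdot_unitary/U_unitary.
elim: t => [|t IH] tT /=; first by rewrite U_step.
by rewrite U_step // qdot_qperm // IH // ltnW.
Qed.

Lemma sum_qmass_le (X : finType) (pos : X -> nat) (a : qvec X) m (P : pred 'I_m) :
  \sum_(i < m | P i) qmass pos a i <= \sum_x `|a x| ^+ 2.
Proof.
apply: (le_trans (y := \sum_(i < m) qmass pos a i)).
  by apply: ler_sum_subpred => // i; apply: sumr_ge0 => x _; apply: exprn_ge0.
rewrite /qmass; under eq_bigr => i _ do rewrite big_mkcond /=.
rewrite exchange_big /=; apply: ler_sum => x _.
case: (ltnP (pos x) m) => [pos_lt | pos_ge].
  rewrite (bigD1 (Ordinal pos_lt)) //= eqxx big1 ?addr0 // => j /negbTE j_ne.
  by rewrite -(inj_eq val_inj) /= eq_sym in j_ne; rewrite j_ne.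
rewrite big1 ?exprn_ge0 // => j _.
by rewrite gtn_eqF // (leq_trans (ltn_ord j) pos_ge).
Qed.

Lemma qdot_distinguishable (X : finType) (a b : qvec X) (S S' : pred X) :
  unit_vec a -> unit_vec b -> {subset S' <= [predC S]} ->
  2%:R / 3%:R <= \sum_(x | S x) `|a x| ^+ 2 ->
  2%:R / 3%:R <= \sum_(x | S' x) `|b x| ^+ 2 ->
  18%:R * `|qdot a b| <= 17%:R.
Proof.
rewrite /unit_vec !ler_pdivrMr ?ltr0n // => a_unit b_unit S'S a_in b_out.
set pa := \sum_(x | S x) `|a x| ^+ 2 in a_in.
set pb := \sum_(x | S x) `|b x| ^+ 2.
have a_off : \sum_(x | ~~ S x) `|a x| ^+ 2 = 1 - pa.
  by rewrite -a_unit [in RHS](bigID S) /= addrAC subrr add0r.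
have b_off : \sum_(x | ~~ S x) `|b x| ^+ 2 = 1 - pb.
  by rewrite -b_unit [in RHS](bigID S) /= addrAC subrr add0r.
have pb_small : pb * 3%:R <= 1.
  have S'_le : \sum_(x | S' x) `|b x| ^+ 2 <= 1 - pb.
    by rewrite -b_off; apply: ler_sum_subpred => // x; apply: exprn_ge0.
  rewrite -subr_ge0 (_ : 1 - pb * 3%:R = (1 - pb) * 3%:R - 2%:R); last by ring.
  by rewrite subr_ge0 (le_trans b_out) // ler_wpM2r.
(* weights 2:3 on S and 3:2 off S, matched to pa >= 2/3 and pb <= 1/3 *)
have dot_le : `|qdot a b| *+ 12 <= 13%:R - pa *+ 5 + pb *+ 5.
  apply: le_trans (ler_wMn2r 12 (ler_norm_qdot_sum predT a b)) _.
  rewrite (bigID S) mulrnDl /=.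
  have := ler_mean_square_sum S a b 2 3; have := ler_mean_square_sum [predC S] a b 3 2.
  rewrite /= a_off b_off !mulr_natl -!mulrnA => off_S on_S.
  apply: le_trans (lerD on_S off_S) _.
  by rewrite le_eqVlt -/pa -/pb; apply/orP; left; apply/eqP; ring.
rewrite -(ler_pMn2r (n := 2)) //.
apply: (le_trans (y := (13%:R - pa *+ 5 + pb *+ 5) *+ 3)).
  by rewrite (_ : _ *+ 2 = (`|qdot a b| *+ 12) *+ 3) ?ler_wMn2r //; ring.
rewrite -subr_ge0 (_ : _ - _ = (pa * 3%:R - 2%:R) *+ 5 + (1 - pb * 3%:R) *+ 5); last by ring.
by rewrite addr_ge0 ?mulrn_wge0 ?subr_ge0.
Qed.

Local Close Scope ring_scope.

Section SubsetPairs.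

Variable m : nat.

Lemma big_setU1_pairs (R : Type) (idx : R) (op : Monoid.com_law idx) k
    (G : {set 'I_m} -> 'I_m -> R) :
  \big[op/idx]_(A : {set 'I_m} | #|A| == k) \big[op/idx]_(i | i \notin A) G (i |: A) i =
  \big[op/idx]_(B : {set 'I_m} | #|B| == k.+1) \big[op/idx]_(i | i \in B) G B i.
Proof.
rewrite !pair_big_dep /=.
rewrite [RHS](reindex_onto (fun p => (p.2 |: p.1, p.2)) (fun p => (p.1 :\ p.2, p.2))) /=.
  apply: eq_bigl => -[A i] /=; rewrite setU11 andbT xpair_eqE eqxx andbT.
  have [iA | iA] := boolP (i \in A); last by rewrite cardsU1 iA eqSS setU1K ?eqxx ?andbT.
  suff -> : ((i |: A) :\ i == A) = false by rewrite /= !andbF.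
  by apply/eqP => E; move: (setD11 i (i |: A)); rewrite E iA.
by move=> -[B i] /andP [_ iB] /=; rewrite setD1K.
Qed.

Lemma count_subsets k : \sum_(A : {set 'I_m} | #|A| == k) 1 = 'C(m, k).
Proof. by rewrite sum1_card -[in RHS](card_ord m) -card_draws cardsE. Qed.

Lemma count_subset_pairs k :
  \sum_(A : {set 'I_m} | #|A| == k) \sum_(i | i \notin A) 1 = 'C(m, k) * (m - k).
Proof.
rewrite -count_subsets big_distrl /=; apply: eq_bigr => A /eqP cardA.
have le_m : #|~: A| <= m by rewrite -[X in _ <= X]card_ord max_card.
rewrite sum1_card mul1n -cardA cardsCs card_ord subKn //.
by apply: eq_card => i; rewrite !inE.
Qed.

End SubsetPairs.

Lemma adversary_arith m k T :
  k < m -> 'C(m, k) * (m - k) <= 18 * T * ('C(m, k) + 'C(m, k.+1)) ->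
  (m - k) * k.+1 <= 18 * T * m.+1.
Proof.
move=> km pairs_le; have C_gt0 : 0 < 'C(m, k) by rewrite bin_gt0 ltnW.
rewrite -(leq_pmul2l C_gt0) (_ : m.+1 = (m - k) + k.+1); last by lia.
apply: (@leq_trans (18 * T * ('C(m, k) + 'C(m, k.+1)) * k.+1)).
  by rewrite mulnA leq_mul2r pairs_le orbT.
by rewrite -mulnA mulnDl (mulnC 'C(m, k.+1)) mul_bin_left; lia.
Qed.

Local Open Scope ring_scope.

Section Adversary.

Variables (X : finType) (m k T : nat) (F : {set 'I_m} -> X -> X) (pos : X -> nat).
Variables (psi0 : qvec X) (U : nat -> qop X) (out : X -> nat) (good0 good1 : pred nat).

Let state A t := qstate (qperm (F A)) psi0 U t.

Hypothesis F_invol : forall A, involutive (F A).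
Hypothesis F_pos : forall A x, pos (F A x) = pos x.
Hypothesis F_local : forall A (i : 'I_m) x, pos x != i -> F A x = F (i |: A) x.
Hypothesis psi0_unit : unit_vec psi0.
Hypothesis U_unitary : forall t, (t <= T)%N -> unitary (U t).
Hypothesis good_disjoint : forall a, good1 a -> ~~ good0 a.
Hypothesis solves_k : forall A : {set 'I_m}, #|A| = k ->
  2%:R / 3%:R <= \sum_(x | good0 (out x)) `|state A T x| ^+ 2.
Hypothesis solves_k1 : forall A : {set 'I_m}, #|A| = k.+1 ->
  2%:R / 3%:R <= \sum_(x | good1 (out x)) `|state A T x| ^+ 2.
Hypothesis k_lt_m : (k < m)%N.

Definition progress t : algC :=
  \sum_(A : {set 'I_m} | #|A| == k) \sum_(i | i \notin A)
    `|qdot (state A t) (state (i |: A) t)|.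

Let npairs := ('C(m, k) * (m - k))%N.
Let nsets := ('C(m, k) + 'C(m, k.+1))%N.

Lemma state_unit A t : (t <= T)%N -> unit_vec (state A t).
Proof. exact: qstate_unit. Qed.

Lemma npairsE : npairs%:R = \sum_(A : {set 'I_m} | #|A| == k) \sum_(i | i \notin A) 1 :> algC.
Proof.
by rewrite /npairs -count_subset_pairs natr_sum; apply: eq_bigr => A _; rewrite natr_sum.
Qed.

Lemma progress0 : progress 0 = npairs%:R.
Proof.
rewrite npairsE; apply: eq_bigr => A _; apply: eq_bigr => i _.
by have := state_unit A (leq0n T); rewrite /unit_vec -qdotvv /state /= => ->; rewrite normr1.
Qed.

Lemma sum_subsets_mass_le j (P : {set 'I_m} -> pred 'I_m) t : (t <= T)%N ->
  \sum_(A : {set 'I_m} | #|A| == j) \sum_(i | P A i) qmass pos (state A t) i <= 'C(m, j)%:R.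
Proof.
move=> tT; rewrite -count_subsets natr_sum; apply: ler_sum => A _.
by apply: le_trans (sum_qmass_le _ _ _) _; rewrite state_unit.
Qed.

Lemma progress_step t : (t < T)%N -> progress t - nsets%:R <= progress t.+1.
Proof.
move=> tT.
set loss := \sum_(A : {set 'I_m} | #|A| == k) \sum_(i | i \notin A)
  (qmass pos (state A t) i + qmass pos (state (i |: A) t) i).
have per_query : progress t - loss <= progress t.+1.
  rewrite /progress /loss -sumrB; apply: ler_sum => A _; rewrite -sumrB.
  apply: ler_sum => i _; rewrite /state /= qdot_unitary; last exact: U_unitary.
  by apply: qdot_query_step => // x; apply: F_local.
apply: le_trans per_query; rewrite lerD2l lerN2 /loss.
under eq_bigr => A _ do rewrite big_split /=.
rewrite big_split /= natrD (@big_setU1_pairs m _ _ _ k (fun B i => qmass pos (state B t) i)).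
by rewrite lerD // sum_subsets_mass_le // ltnW.
Qed.

Lemma progress_lower t : (t <= T)%N -> npairs%:R - t%:R * nsets%:R <= progress t.
Proof.
elim: t => [|t IH] tT; first by rewrite mul0r subr0 progress0.
apply: le_trans (progress_step tT).
by rewrite -addn1 natrD mulrDl mul1r opprD addrA lerD2r IH // ltnW.
Qed.

Lemma progress_final : 18%:R * progress T <= 17%:R * npairs%:R.
Proof.
rewrite npairsE !mulr_sumr; apply: ler_sum => A /eqP cardA.
rewrite !mulr_sumr; apply: ler_sum => i iA; rewrite mulr1.
apply: (qdot_distinguishable (S := fun x => good0 (out x)) (S' := fun x => good1 (out x))).
- exact: state_unit.
- exact: state_unit.
- by move=> x; rewrite !inE; apply: good_disjoint.
- exact: solves_k.
- by apply: solves_k1; rewrite cardsU1 iA cardA.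
Qed.

Theorem adversary_bound : ((m - k) * k.+1 <= 18 * T * m.+1)%N.
Proof.
apply: adversary_arith k_lt_m _; rewrite -/npairs -/nsets.
suff : npairs%:R <= (18 * T * nsets)%:R :> algC by rewrite ler_nat.
rewrite -subr_ge0 (_ : _ - _ = 17%:R * npairs%:R - 18%:R * (npairs%:R - T%:R * nsets%:R)).
  by rewrite subr_ge0; apply: le_trans progress_final; rewrite ler_pM2l ?progress_lower.
by rewrite !natrM; ring.
Qed.

End Adversary.

Local Close Scope ring_scope.

Section Infix.

Variable T : eqType.
Implicit Types (s u t : seq T) (c : T).

Lemma prefix_cat_cons_notin c s1 s2 u :
  prefix u (s1 ++ c :: s2) -> c \notin u -> prefix u s1.
Proof.
elim: s1 u => [|x s1 IH] [|y u] //=; first by case/andP=> /eqP ->; rewrite inE eqxx.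
case/andP=> /eqP -> u_pre; rewrite inE negb_or => /andP [_ cu].
by rewrite eqxx IH.
Qed.

Lemma infix_cat_cons_notin c s1 s2 u :
  infix u (s1 ++ c :: s2) -> c \notin u -> infix u s1 \/ infix u s2.
Proof.
elim: s1 => [|x s1 IH]; rewrite ?cat0s ?cat_cons infix_consl => /orP [u_pre cu | u_inf cu].
- by left; rewrite infixs0 -prefixs0 (prefix_cat_cons_notin (s1 := [::]) u_pre cu).
- by right.
- by left; apply: prefixW; apply: (prefix_cat_cons_notin (s1 := x :: s1) u_pre cu).
- by case: (IH u_inf cu) => h; [left; rewrite infix_consl h orbT | right].
Qed.

Lemma infix_size_eq u s : infix u s -> size u = size s -> u = s.
Proof. by move=> /infixW /size_subseq_leqif [_ eq_size] /eqP; rewrite eq_size => /eqP. Qed.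

Definition lcinfix t s1 s2 :=
  [/\ infix t s1, infix t s2 & forall u, infix u s1 -> infix u s2 -> size u <= size t].

Section TwoBlocks.

Variables (R : seq T) (e f g : T) (L : nat).
Hypotheses (eR : e \notin R) (ef : e != f) (eg : e != g).

Let s1 := R ++ e :: nseq L g.
Let s2 := R ++ f :: nseq L g.

Lemma common_infix_two_blocks u : infix u s1 -> infix u s2 -> infix u R \/ infix u (nseq L g).
Proof.
move=> u1 u2; apply: (infix_cat_cons_notin u1); apply/negP => eu.
have := mem_infix u2 eu; rewrite mem_cat inE (negbTE eR) (negbTE ef) /=.
by case/nseqP => /eqP; rewrite (negbTE eg).
Qed.

Lemma lcinfix_two_blocks t : size R != L ->
  lcinfix t s1 s2 <-> t = if L < size R then R else nseq L g.
Proof.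
move=> /eqP RL.
have infix_R : infix R s1 /\ infix R s2 by split; apply: prefix_infix.
have infix_G : infix (nseq L g) s1 /\ infix (nseq L g) s2.
  by split; apply/infix_catl/(infix_trans _ (infix_cons _ _))/infix_refl.
have common_le u : infix u s1 -> infix u s2 -> size u <= maxn (size R) L.
  move=> u1 u2; case: (common_infix_two_blocks u1 u2) => /infixW /size_subseq;
  rewrite ?size_nseq; lia.
split=> [[t1 t2 t_max] | ->].
  have R_le := t_max _ infix_R.1 infix_R.2.
  have := t_max _ infix_G.1 infix_G.2; rewrite size_nseq => G_le.
  case: (common_infix_two_blocks t1 t2) => t_inf; have := size_subseq (infixW t_inf);
    rewrite ?size_nseq => t_le; case: ifP => LR;
    try apply: (infix_size_eq t_inf); rewrite ?size_nseq; lia.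
case: ifP => LR; split; try (by case: infix_R); try (by case: infix_G);
  move=> u u1 u2; have := common_le _ u1 u2; rewrite ?size_nseq; lia.
Qed.

End TwoBlocks.
End Infix.

Section RunLength.

Variable T : eqType.

Lemma rle_cons_head (x : T) t : exists k r, rle (x :: t) = (x, k) :: r.
Proof.
rewrite /=; case: (rle t) => [|[y k] r]; first by exists 1, [::].
by case: eqP => [->|_]; [exists k.+1, r | exists 1, ((y, k) :: r)].
Qed.

Lemma size_rle_cons (x : T) t :
  size (rle (x :: t)) = size (rle t) + (if t is y :: _ then x != y else true).
Proof.
case: t => [|y t] //=; have [k [r E]] := rle_cons_head y t.
by rewrite /= in E; rewrite E; case: eqP => //= _; rewrite ?addn0 ?addn1.
Qed.

Lemma size_rle_nseq (x : T) k t :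
  size (rle (nseq k.+1 x ++ t)) = size (rle t) + (if t is y :: _ then x != y else true).
Proof.
elim: k => [|k IH]; first exact: size_rle_cons.
by rewrite [nseq _ _]/= cat_cons size_rle_cons IH /= eqxx addn0.
Qed.

Lemma size_rle_flatten (s : seq (T * nat)) :
  all (fun p => 0 < p.2) s -> sorted (fun p q => p.1 != q.1) s ->
  size (rle (flatten [seq nseq p.2 p.1 | p <- s])) = size s.
Proof.
elim: s => [|[x l] s IH] //= /andP [l_pos s_pos] s_sorted.
case: l l_pos s_sorted => // l _ s_sorted; rewrite size_rle_nseq IH ?(path_sorted s_sorted) //.
case: s s_pos s_sorted {IH} => [|[y l'] s] //= /andP [l'_pos _] /andP [xy _].
by case: l' l'_pos => [|l'] //= _; rewrite xy addn1.
Qed.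

End RunLength.

Lemma size_rle_decode (bc br : nat) (s : rle_str bc br) :
  valid_rle s -> size (rle (decode s)) = size s.
Proof.
case/andP=> s_pos s_sorted.
have -> : decode s = flatten [seq nseq p.2 p.1 | p <- [seq (p.1, bval p.2) | p <- s]].
  by rewrite /decode -map_comp.
by rewrite size_rle_flatten ?size_map ?all_map ?sorted_map.
Qed.

Lemma size_decode (bc br : nat) (s : rle_str bc br) :
  size (decode s) = \sum_(p <- s) bval p.2.
Proof.
elim: s => [|p s IH]; first by rewrite big_nil.
by rewrite big_cons /decode /= size_cat size_nseq -IH.
Qed.

Lemma decode_rcons (bc br : nat) (s : rle_str bc br) p :
  decode (rcons s p) = decode s ++ nseq (bval p.2) p.1.
Proof. by rewrite /decode -cats1 map_cat flatten_cat /= cats0. Qed.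

Lemma valid_rle_mkseq (bc br : nat) (h : nat -> bits bc * bits br) N :
  (forall j, j < N -> 0 < bval (h j).2) ->
  (forall j, j.+1 < N -> (h j).1 != (h j.+1).1) -> valid_rle (mkseq h N).
Proof.
move=> h_pos h_neq; apply/andP; split.
  by apply/allP => p /mapP [j]; rewrite mem_iota => /andP [_ jN] ->; apply: h_pos.
apply/(sortedP (h 0)) => j; rewrite size_mkseq => jN.
by rewrite !nth_mkseq ?h_neq // ltnW.
Qed.

Definition bits_of_nat (b v : nat) : bits b := [ffun i : 'I_b => odd (v %/ 2 ^ i)].

Lemma bval_bits_of_nat b v : v < 2 ^ b -> bval (bits_of_nat b v) = v.
Proof.
elim: b v => [|b IH] v v_lt; first by rewrite /bval big_ord0; case: v v_lt.
rewrite /bval big_ord_recl /= ffunE expn0 divn1 muln1.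
have -> : \sum_(i < b) (bits_of_nat b.+1 v (lift ord0 i) : nat) * 2 ^ (lift ord0 i) =
          2 * bval (bits_of_nat b (v %/ 2)).
  rewrite /bval big_distrr /=; apply: eq_bigr => i _.
  rewrite !ffunE /= /bump /= add1n expnS -divnMA; lia.
rewrite IH; last by rewrite ltn_divLR // -expnSr.
by rewrite divn2 -[RHS](odd_double_half v) -muln2; lia.
Qed.

Lemma eq_bits_of_nat b u v : u < 2 ^ b -> v < 2 ^ b ->
  (bits_of_nat b u == bits_of_nat b v) = (u == v).
Proof.
move=> u_lt v_lt; apply/eqP/eqP => [E | -> //].
by rewrite -(bval_bits_of_nat u_lt) -(bval_bits_of_nat v_lt) E.
Qed.

Lemma ellcs_answerE (bc br : nat) (A B : rle_str bc br) a :
  ellcs_answer A B a <-> exists2 t, lcinfix t (decode A) (decode B) & a = size (rle t).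
Proof. by split=> [[t [tA tB t_max ->]] | [t [tA tB t_max] ->]]; exists t. Qed.

Definition nat_mem (m : nat) (S : {set 'I_m}) (j : nat) : bool := j \in [seq val i | i in S].

Lemma nat_mem_val m (S : {set 'I_m}) (i : 'I_m) : nat_mem S i = (i \in S).
Proof. exact: (mem_image val_inj). Qed.

Lemma nat_mem_setU1 m (S : {set 'I_m}) (i : 'I_m) j :
  nat_mem (i |: S) j = (j == i) || nat_mem S j.
Proof.
apply/imageP/orP => [[i0] | [/eqP -> | /imageP [i0 i0S ->]]].
- by rewrite in_setU1 => /orP [/eqP -> -> | i0S ->]; [left | right; apply: image_f].
- by exists i; rewrite ?setU11.
- by exists i0; rewrite // in_setU1 i0S orbT.
Qed.

Section Gadget.

Variables (m L bc br : nat) (S : {set 'I_m}).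

Definition gadget_code (sel : bool) (j : nat) : nat :=
  if j < m then odd j : nat else if j == m then 2 + sel else 4.

Definition gadget_length (j : nat) : nat :=
  if j < m then 1 + 2 * nat_mem S j else if j == m then 1 else L.

Definition gadget_run (sel : bool) (j : nat) : bits bc * bits br :=
  (bits_of_nat bc (gadget_code sel j), bits_of_nat br (gadget_length j)).

Definition gadget (sel : bool) : rle_str bc br := mkseq (gadget_run sel) m.+2.

Definition gadget_prefix : seq (bits bc) := decode (mkseq (gadget_run false) m).

Lemma size_gadget sel : size (gadget sel) = m.+2.
Proof. exact: size_mkseq. Qed.

Hypotheses (bc_big : 4 < 2 ^ bc) (br_big : 3 < 2 ^ br) (L_pos : 0 < L) (L_lt : L < 2 ^ br).

Lemma gadget_code_lt sel j : gadget_code sel j < 2 ^ bc.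
Proof.
apply: leq_ltn_trans bc_big; rewrite /gadget_code.
by case: ifP => _; [case: (odd j) | case: ifP => _; case: sel].
Qed.

Lemma bval_gadget_run sel j : bval (gadget_run sel j).2 = gadget_length j.
Proof.
rewrite bval_bits_of_nat // /gadget_length.
by case: ifP => _; [|case: ifP => _ //]; apply: leq_ltn_trans br_big; case: (nat_mem S j).
Qed.

Lemma valid_gadget_runs sel N : N <= m.+2 -> valid_rle (mkseq (gadget_run sel) N).
Proof.
move=> N_le; apply: valid_rle_mkseq => j j_lt.
  by rewrite bval_gadget_run /gadget_length; case: ifP => // _; case: ifP.
rewrite /= eq_bits_of_nat ?gadget_code_lt // /gadget_code.
have [j1_lt | [j1_eq | j_eq]] : j.+1 < m \/ j.+1 = m \/ j = m by lia.
- by rewrite j1_lt (ltnW j1_lt) /=; case: (odd j).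
- by rewrite -j1_eq ltnSn ltnn eqxx /=; case: (odd j); case: sel.
- by rewrite j_eq ltnn eqxx ltnNge leqnSn (gtn_eqF (ltnSn m)); case: sel.
Qed.

Lemma decode_gadget sel :
  decode (gadget sel) = gadget_prefix ++ bits_of_nat bc (2 + sel) :: nseq L (bits_of_nat bc 4).
Proof.
have same_prefix : mkseq (gadget_run sel) m = mkseq (gadget_run false) m.
  apply/eq_in_map => j; rewrite mem_iota => /andP [_ j_lt].
  by rewrite /gadget_run /gadget_code j_lt.
rewrite /gadget !mkseqS !decode_rcons same_prefix -catA !bval_gadget_run /gadget_length.
by rewrite /= /gadget_code ltnn eqxx ltnNge leqnSn (gtn_eqF (ltnSn m)).
Qed.

Lemma size_gadget_prefix : size gadget_prefix = m + 2 * #|S|.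
Proof.
rewrite /gadget_prefix size_decode big_map (_ : iota 0 m = index_iota 0 m); last first.
  by rewrite /index_iota subn0.
rewrite (eq_big_nat _ _ (F2 := fun j => 1 + 2 * nat_mem S j)) => [|j /andP [_ j_lt]]; last first.
  by rewrite bval_gadget_run /gadget_length j_lt.
rewrite big_mkord big_split /= sum1_card card_ord -big_distrr /= -sum1_card [in RHS]big_mkcond /=.
by congr (_ + 2 * _); apply: eq_bigr => i _; rewrite nat_mem_val; case: (i \in S).
Qed.

Lemma size_rle_gadget_prefix : size (rle gadget_prefix) = m.
Proof. by rewrite size_rle_decode ?size_mkseq // valid_gadget_runs // leqW. Qed.

Lemma gadget_prefix_notin v : 2 <= v <= 4 -> bits_of_nat bc v \notin gadget_prefix.
Proof.
case/andP=> v2 v4; apply/negP => /flattenP [_ /mapP [_ /mapP [j j_iota ->] ->]] /nseqP [E _].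
move: j_iota E; rewrite mem_iota add0n => /andP [_ j_lt] /eqP.
rewrite eq_bits_of_nat ?gadget_code_lt ?(leq_ltn_trans v4) // /gadget_code j_lt.
by case: (odd j) => /= /eqP; lia.
Qed.

Lemma ellcs_answer_gadget a : m + 2 * #|S| != L ->
  ellcs_answer (gadget false) (gadget true) a <-> a = if L < m + 2 * #|S| then m else 1.
Proof.
rewrite -size_gadget_prefix => size_ne; rewrite ellcs_answerE !decode_gadget.
have code_neq u v : u <= 4 -> v <= 4 -> u != v -> bits_of_nat bc u != bits_of_nat bc v.
  by move=> u4 v4; rewrite eq_bits_of_nat // (leq_ltn_trans _ bc_big).
have lc t := lcinfix_two_blocks (gadget_prefix_notin (v := 2 + false) isT)
  (code_neq (2 + false) (2 + true) isT isT isT) (code_neq (2 + false) 4 isT isT isT) t size_ne.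
have size_rle_answer : size (rle (if L < size gadget_prefix then gadget_prefix
                                  else nseq L (bits_of_nat bc 4))) =
                       if L < size gadget_prefix then m else 1.
  case: ifP => _; first exact: size_rle_gadget_prefix.
  by rewrite -(prednK L_pos) -[nseq _ _]cats0 size_rle_nseq.
by split=> [[t /lc -> ->] // | ->]; eexists; first exact/lc.
Qed.

End Gadget.

Definition qpos (n bc br w : nat) (q : qbasis n bc br w) : nat := val q.1.1.1.2.

Lemma oracle_map_involutive n bc br w (A B : rle_str bc br) :
  involutive (@oracle_map n bc br w A B).
Proof.
have bxorK b (c p : bits b) : bxor (bxor c p) p = c by apply/ffunP => j; rewrite !ffunE addbK.
by case=> [[[[sel i] c] r] z]; rewrite /oracle_map /= !bxorK.
Qed.

Lemma qpos_oracle_map n bc br w (A B : rle_str bc br) q :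
  qpos (@oracle_map n bc br w A B q) = qpos q.
Proof. by case: q => [[[[sel i] c] r] z]. Qed.

Lemma oracle_map_gadget_setU1 n bc br w m L (S : {set 'I_m}) (i : 'I_m) q :
  qpos q != i ->
  @oracle_map n bc br w (gadget L bc br S false) (gadget L bc br S true) q =
  oracle_map (gadget L bc br (i |: S) false) (gadget L bc br (i |: S) true) q.
Proof.
case: q => [[[[sel j] c] r] z]; rewrite /qpos /= => j_ne.
have same_run sel' : nth (bzero bc, bzero br) (gadget L bc br S sel') j =
                     nth (bzero bc, bzero br) (gadget L bc br (i |: S) sel') j.
  rewrite /gadget; case: (ltnP j m.+2) => j_lt; last by rewrite !nth_default ?size_mkseq.
  by rewrite !nth_mkseq // /gadget_run /gadget_length nat_mem_setU1 (negbTE j_ne).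
by rewrite /oracle_map; case: sel; rewrite same_run.
Qed.

Local Open Scope ring_scope.

Lemma solves_gadget m bc br w T (psi0 : qvec (qbasis m.+2 bc br w)) U out L (S : {set 'I_m}) :
  solves_ellcs T psi0 U out -> (4 < 2 ^ bc)%N -> (3 < 2 ^ br)%N -> (0 < L)%N -> (L < 2 ^ br)%N ->
  (m + 2 * #|S| != L)%N ->
  2%:R / 3%:R <= \sum_(x | out x == if (L < m + 2 * #|S|)%N then m else 1%N)
    `|qstate (qperm (oracle_map (gadget L bc br S false) (gadget L bc br S true))) psi0 U T x| ^+ 2.
Proof.
move=> solves bc_big br_big L_pos L_lt size_ne.
apply: (solves _ _ _ _ _ _ (pred1 _)); rewrite ?size_gadget ?valid_gadget_runs //.
by move=> a; rewrite ellcs_answer_gadget //; split=> /eqP.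
Qed.

Local Close Scope ring_scope.

Lemma double_lt_exp2 n b : (trunc_log 2 n).+2 <= b -> 2 * n < 2 ^ b.
Proof.
move=> b_ge; apply: leq_trans (leq_pexp2l (isT : 0 < 2) b_ge).
by rewrite expnS ltn_pmul2l // trunc_log_ltn.
Qed.

Lemma half_slice_arith m T :
  2 <= m -> (m - m./2) * (m./2).+1 <= 18 * T * m.+1 -> m.+2 <= 74 * T.
Proof.
move=> m_ge2 bound; set k := m./2 in bound.
have m_split : m = k * 2 + odd m by rewrite -[LHS]odd_double_half addnC muln2.
have sq_le : m * m.+1 <= 4 * ((m - k) * k.+1).
  have m_le : m <= 2 * (m - k) by case: (odd m) m_split; lia.
  have m1_le : m.+1 <= 2 * k.+1 by case: (odd m) m_split; lia.
  by have := leq_mul m_le m1_le; lia.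
have : m <= 72 * T by rewrite -(leq_pmul2r (ltn0Sn m)); lia.
lia.
Qed.

Theorem lemma8 :
  exists k c e N0 : nat,
  forall n bc br : nat, N0 <= n ->
    k * (trunc_log 2 n).+1 <= bc -> k * (trunc_log 2 n).+1 <= br ->
  forall (w T : nat) (psi0 : qvec (qbasis n bc br w))
         (U : nat -> qop (qbasis n bc br w)) (out : qbasis n bc br w -> nat),
    unit_vec psi0 -> (forall t, t <= T -> unitary (U t)) ->
    solves_ellcs T psi0 U out ->
    n <= c * T * (trunc_log 2 n).+1 ^ e.
Proof.
exists 3, 74, 0, 4 => n bc br n_ge4 bc_ge br_ge w T psi0 U out psi0_unit U_unitary solves.
rewrite expn0 muln1.
have [bc_big br_big] : 2 * n < 2 ^ bc /\ 2 * n < 2 ^ br by split; apply: double_lt_exp2; lia.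
have [m n_eq] : exists m, n = m.+2 by exists (n - 2); lia.
subst n; set k := m./2.
have k_le : 2 * k <= m by rewrite -[X in _ <= X]odd_double_half -muln2 mulnC leq_addl.
have [L L_def] : exists L, L = m + 2 * k + 1 by exists (m + 2 * k + 1).
have [bc4 br3 L_pos L_lt] : [/\ 4 < 2 ^ bc, 3 < 2 ^ br, 0 < L & L < 2 ^ br] by split; lia.
have success S := solves_gadget (S := S) solves bc4 br3 L_pos L_lt.
apply: half_slice_arith; first by lia.
apply: (@adversary_bound _ m k T
          (fun S => oracle_map (gadget L bc br S false) (gadget L bc br S true))
          (@qpos m.+2 bc br w) psi0 U out (pred1 1) (pred1 m)) => //.
- by move=> S; apply: oracle_map_involutive.
- by move=> S q; apply: qpos_oracle_map.
- by move=> S i q; apply: oracle_map_gadget_setU1.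
- by move=> a /eqP ->; apply/eqP; lia.
- move=> S S_k; have := success S; rewrite S_k ifF; first by apply; apply/eqP; lia.
  by apply/negbTE; rewrite -leqNgt; lia.
- by move=> S S_k1; have := success S; rewrite S_k1 ifT; [apply; apply/eqP |]; lia.
- by lia.
Qed.
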